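(* Let $\alpha\in(1,\infty)$ and suppose $g$ satisfies Assumption 1 with this $\alpha$ and with a supergradient $g'(x^* )>0$, and also satisfies Assumption 2 with the same $\alpha$. Then in the asymptotic regime there exist constants $0<K_1\le K_2$ and $c_0$ independent of $c$ such that for all $c\ge c_0$ there is a two-price policy $\mathbf x^{\mathrm{TP}}$ with $$K_1c^{1/(\alpha+1)}\le\lambda g(x^* )-\sup_{\mathbf x\in[0,1]^c}\mathcal R(\mathbf x)\le\lambda g(x^* )-\mathcal R(\mathbf x^{\mathrm{TP}})\le K_2\,c^{1/(\alpha+1)}(\log c)^2,$$ i.e. the optimal performance loss $\tilde\Theta(c^{1/(\alpha+1)})$ among stock-dependent policies is attained (up to logarithmic factors) by a two-price policy.
   Context: Setting. Fix $c\in\mathbb N$ (number of identical units of a single reusable resource), an arrival rate $\lambda>0$ and a mean usage duration $d>0$, with $x^*:=c/(\lambda d)\in(0,1)$. Let $g:[0,1]\to\mathbb R$ be concave, non-decreasing, with $g(0)=0$ (the reward function). A stock-dependent policy is a vector $\mathbf x=(x_1,\dots,x_c)\in[0,1]^c$, where $x_j$ is the admission probability used when exactly $j$ units are available (the admission probability is $0$ when no unit is available). Its steady-state distribution is the unique probability vector $\pi=(\pi_0,\dots,\pi_c)$ satisfying $\pi_j\lambda x_j=\pi_{j-1}(c-j+1)/d$ for all $j\in\{1,\dots,c\}$, and its long-run average reward is $\mathcal R(\mathbf x)=\sum_{j=1}^c\pi_j\lambda g(x_j)$. A two-price policy with parameters $x_L,x_H\in[0,1]$ and $\tau\in\{1,\dots,c\}$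 sets $x_j=x_L$ for $1\le j\le\tau$ and $x_j=x_H$ for $\tau<j\le c$. Asymptotic regime: $x^*\in(0,1)$, $d$ and $g$ are fixed, $c\to\infty$ and $\lambda=c/(x^*d)$. Assumption 1: there exist $0<\varepsilon<\min\{x^*,1-x^*\}$, $\alpha\in[1,\infty]$, $k_1\ge0$ and a supergradient $g'(x^* )\ge0$ of $g$ at $x^*$ such that $g(x)\ge g(x^* )+g'(x^* )(x-x^* )-k_1|x-x^*|^\alpha$ for all $x\in[x^*-\varepsilon,x^*+\varepsilon]$. Assumption 2: there exist $0<\varepsilon<\min\{x^*,1-x^*\}$, $\alpha\in[1,\infty]$, $k_2>0$ and a supergradient $g'(x^* )\ge0$ of $g$ at $x^*$ such that $g(x)\le g(x^* )+g'(x^* )(x-x^* )-k_2|x-x^*|^\alpha$ for all $x\in[x^*-\varepsilon,x^*+\varepsilon]$. *)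

From Stdlib Require Import Reals Lra Lia ClassicalEpsilon.
From Coquelicot Require Import Coquelicot.
Open Scope R_scope.

(* real power b^a for b >= 0 (with 0^a = 0 for a > 0) *)
Definition rpow (b a : R) : R := if Rlt_dec 0 b then Rpower b a else 0.

Definition reward_function (g : R -> R) : Prop :=
  g 0 = 0 /\
  (forall x y, 0 <= x -> x <= y -> y <= 1 -> g x <= g y) /\
  (forall x y t, 0 <= x <= 1 -> 0 <= y <= 1 -> 0 <= t <= 1 ->
     t * g x + (1 - t) * g y <= g (t * x + (1 - t) * y)).

Definition supergradient (g : R -> R) (xs s : R) : Prop :=
  forall y, 0 <= y <= 1 -> g y <= g xs + s * (y - xs).

Definition assumption1 (g : R -> R) (xs alpha s : R) : Prop :=
  exists eps k1, 0 < eps /\ eps < Rmin xs (1 - xs) /\ 0 <= k1 /\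
    0 <= s /\ supergradient g xs s /\
    forall x, xs - eps <= x <= xs + eps ->
      g xs + s * (x - xs) - k1 * rpow (Rabs (x - xs)) alpha <= g x.

Definition assumption2 (g : R -> R) (xs alpha s : R) : Prop :=
  exists eps k2, 0 < eps /\ eps < Rmin xs (1 - xs) /\ 0 < k2 /\
    0 <= s /\ supergradient g xs s /\
    forall x, xs - eps <= x <= xs + eps ->
      g x <= g xs + s * (x - xs) - k2 * rpow (Rabs (x - xs)) alpha.

(* A stock-dependent policy: x j in [0,1] for j = 1..c (other indices unused) *)
Definition policy (c : nat) (x : nat -> R) : Prop :=
  forall j, (1 <= j <= c)%nat -> 0 <= x j <= 1.

Definition is_steady_state (c : nat) (lam d : R) (x pi : nat -> R) : Prop :=
  (forall j, (j <= c)%nat -> 0 <= pi j) /\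
  sum_f_R0 pi c = 1 /\
  forall j, (1 <= j <= c)%nat ->
    pi j * lam * x j = pi (j - 1)%nat * INR (c - j + 1) / d.

Definition steady_state (c : nat) (lam d : R) (x : nat -> R) : nat -> R :=
  epsilon (inhabits (fun _ : nat => 0)) (is_steady_state c lam d x).

Definition avg_reward (c : nat) (lam d : R) (g : R -> R) (x : nat -> R) : R :=
  sum_f 1 c (fun j => steady_state c lam d x j * lam * g (x j)).

Definition opt_reward (c : nat) (lam d : R) (g : R -> R) : R :=
  real (Lub_Rbar (fun r => exists x, policy c x /\ r = avg_reward c lam d g x)).

Definition two_price (xL xH : R) (tau : nat) : nat -> R :=
  fun j => if (j <=? tau)%nat then xL else xH.

From Stdlib Require Import Reals Lra Lia ZArith ClassicalEpsilon.
From Coquelicot Require Import Coquelicot.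
Open Scope R_scope.

(** After some facts on finite sums, we construct the
    steady state of every policy (so [avg_reward] is the reward of an actual
    stationary distribution) and prove the loss decomposition: with [A] the
    mean number of available units and [gap] the distance from [g] to its
    tangent line at [xs], Little's law gives
      [lam g xs - R = lam (pi_0 gap 0 + sum_j pi_j gap x_j) + s A / d].
    - Lower bound: by concavity and Assumption 2, the gap term controls the
      total deviation [sum_j pi_j |x_j - xs|]; a potential argument along the
      balance equations shows that small deviation and small mean stock
      cannot coexist ([spreading]).  At scale [gam = c^(1/(alpha+1))] this
      forces a loss of at least [lower_const * gam] for every policy.
    - Upper bound: for prices [xs -+ 1/gam] switching at [tau ~ 2 xs gam ln c],
      the stock-out probability is at most [1/c], Assumption 1 bounds the gap
      term by [k1 gam / (xs d)], and the mean stock is [O(gam ln c)].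
    The theorem combines both bounds with the supremum defining
    [opt_reward]; Assumptions 1 and 2 together make the slope positive, which
    the lower bound needs. *)

Lemma sum_nonneg (f : nat -> R) n :
  (forall i, (i <= n)%nat -> 0 <= f i) -> 0 <= sum_f_R0 f n.
Proof.
  induction n as [|n IH]; intros Hf; simpl; [apply Hf; lia|].
  assert (0 <= f (S n)) by (apply Hf; lia).
  assert (0 <= sum_f_R0 f n) by (apply IH; intros; apply Hf; lia).
  lra.
Qed.

Lemma sum_le_longer (f : nat -> R) m n :
  (forall i, (i <= n)%nat -> 0 <= f i) -> (m <= n)%nat ->
  sum_f_R0 f m <= sum_f_R0 f n.
Proof.
  intros Hf Hmn. induction Hmn as [|n Hmn IH]; [lra|]. simpl.
  assert (0 <= f (S n)) by (apply Hf; lia).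
  assert (sum_f_R0 f m <= sum_f_R0 f n) by (apply IH; intros; apply Hf; lia).
  lra.
Qed.

Lemma term_le_sum (f : nat -> R) n k :
  (forall i, (i <= n)%nat -> 0 <= f i) -> (k <= n)%nat -> f k <= sum_f_R0 f n.
Proof.
  intros Hf Hk. destruct k as [|k].
  - apply Rle_trans with (sum_f_R0 f 0); [simpl; lra|].
    apply sum_le_longer; auto; lia.
  - apply Rle_trans with (sum_f_R0 f (S k)); [|apply sum_le_longer; auto].
    assert (0 <= sum_f_R0 f k) by (apply sum_nonneg; intros; apply Hf; lia).
    simpl; lra.
Qed.

Lemma window_le_sum (f : nat -> R) k N n :
  (forall i, (i <= n)%nat -> 0 <= f i) -> (k + N <= n)%nat ->
  sum_f_R0 (fun i => f (k + i)%nat) N <= sum_f_R0 f n.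
Proof.
  intros Hf Hk. destruct k as [|k]; [simpl; apply sum_le_longer; auto; lia|].
  apply Rle_trans with (sum_f_R0 f (S k + N)); [|apply sum_le_longer; auto].
  rewrite (tech2 f k (S k + N)) by lia.
  replace (S k + N - S k)%nat with N by lia.
  assert (0 <= sum_f_R0 f k) by (apply sum_nonneg; intros; apply Hf; lia).
  lra.
Qed.

Lemma sum_lin (u v : nat -> R) a b n :
  sum_f_R0 (fun i => a * u i + b * v i) n = a * sum_f_R0 u n + b * sum_f_R0 v n.
Proof. induction n as [|n IH]; simpl; [ring|]. rewrite IH; ring. Qed.

Lemma sum_split_first (F : nat -> R) c : (1 <= c)%nat ->
  sum_f_R0 F c = F O + sum_f_R0 (fun i => F (S i)) (c - 1).
Proof. intros Hc. rewrite decomp_sum by lia. do 2 f_equal. lia. Qed.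

Lemma sum_split_last (F : nat -> R) c : (1 <= c)%nat ->
  sum_f_R0 F c = sum_f_R0 F (c - 1) + F c.
Proof. intros Hc. replace c with (S (c - 1)) at 1 by lia. simpl. do 2 f_equal. lia. Qed.

Lemma sum_from_1 (F : nat -> R) c : (1 <= c)%nat ->
  sum_f 1 c F = sum_f_R0 (fun i => F (S i)) (c - 1).
Proof. intros Hc. unfold sum_f. apply sum_eq. intros i _. f_equal. lia. Qed.

Lemma sum_id_INR N : sum_f_R0 INR N = INR N * (INR N + 1) / 2.
Proof.
  induction N as [|N IH]; cbn [sum_f_R0]; [rewrite INR_0; field|].
  rewrite IH, S_INR. field.
Qed.

Lemma nat_of_up gam : 0 < gam -> exists N : nat, gam < INR N <= gam + 1.
Proof.
  intros H. destruct (archimed gam) as [H1 H2].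
  assert (0 <= up gam)%Z by (apply le_IZR; lra).
  exists (Z.to_nat (up gam)). rewrite INR_IZR_INZ, Z2Nat.id by auto. lra.
Qed.

Lemma rpow_pos_eq x a : 0 < x -> rpow x a = Rpower x a.
Proof. intros H. unfold rpow. destruct (Rlt_dec 0 x); [auto|lra]. Qed.

Lemma Rpower_pos x a : 0 < Rpower x a.
Proof. apply exp_pos. Qed.

Lemma Rpower_inv x a : 0 < x -> Rpower (/ x) a = / Rpower x a.
Proof. intros H. unfold Rpower. rewrite ln_Rinv, <- exp_Ropp by auto. f_equal. ring. Qed.

Lemma INR_free_units c j : (1 <= j <= c)%nat -> INR (c - j + 1) = INR c - INR j + 1.
Proof. intros Hj. rewrite plus_INR, minus_INR by lia. simpl. ring. Qed.

(** Let [m] be the largest state [j <= c] at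
    which the admission probability vanishes ([m = 0] if there is none).  The
    balance equations force [pi j = 0] for [j < m], and above [m] they determine
    [pi] up to normalisation by the products of the ratios
    [(c - j + 1) / (d lam x_j)]. *)

Fixpoint last_zero (x : nat -> R) (n : nat) : nat :=
  match n with
  | O => O
  | S k => if Req_EM_T (x (S k)) 0 then S k else last_zero x k
  end.

Lemma last_zero_le x n : (last_zero x n <= n)%nat.
Proof. induction n; simpl; [lia|]. destruct (Req_EM_T _ _); lia. Qed.

Lemma last_zero_spec x n : last_zero x n = O \/ x (last_zero x n) = 0.
Proof. induction n; simpl; [auto|]. destruct (Req_EM_T _ _); auto. Qed.

Lemma above_last_zero x n j : (last_zero x n < j <= n)%nat -> x j <> 0.
Proof.
  induction n as [|n IH]; simpl; intros Hj; [lia|].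
  destruct (Req_EM_T _ _); [lia|].
  destruct (Nat.eq_dec j (S n)) as [->|Hne]; auto. apply IH; lia.
Qed.

Section SteadyState.
Variables (c : nat) (lam d : R) (x : nat -> R).

Fixpoint weight (m j : nat) : R :=
  match j with
  | O => if (0 <? m)%nat then 0 else 1
  | S k => if (S k <? m)%nat then 0 else if (S k =? m)%nat then 1
           else weight m k * (INR (c - S k + 1) / (d * lam * x (S k)))
  end.

Lemma weight_below m j : (j < m)%nat -> weight m j = 0.
Proof.
  intros H. destruct j; cbn [weight].
  - replace (0 <? m)%nat with true; auto. symmetry; apply Nat.ltb_lt; lia.
  - replace (S j <? m)%nat with true; auto. symmetry; apply Nat.ltb_lt; lia.
Qed.

Lemma weight_at m : weight m m = 1.
Proof.
  destruct m; cbn [weight]; auto.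
  replace (S m <? S m)%nat with false by (symmetry; apply Nat.ltb_ge; lia).
  now rewrite Nat.eqb_refl.
Qed.

Lemma weight_above m j : (m < S j)%nat ->
  weight m (S j) = weight m j * (INR (c - S j + 1) / (d * lam * x (S j))).
Proof.
  intros H. cbn [weight].
  replace (S j <? m)%nat with false by (symmetry; apply Nat.ltb_ge; lia).
  replace (S j =? m)%nat with false by (symmetry; apply Nat.eqb_neq; lia).
  reflexivity.
Qed.

Hypotheses (Hlam : 0 < lam) (Hd : 0 < d) (Hx : policy c x).

Let m := last_zero x c.

Lemma weight_nonneg j : (j <= c)%nat -> 0 <= weight m j.
Proof.
  induction j as [|j IH]; intros Hj.
  - simpl. destruct (0 <? m)%nat; lra.
  - destruct (Nat.lt_ge_cases (S j) m); [rewrite weight_below; auto; lra|].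
    destruct (Nat.eq_dec (S j) m) as [E|E]; [rewrite E, weight_at; lra|].
    rewrite weight_above by lia.
    assert (Hpos : 0 < x (S j)).
    { assert (x (S j) <> 0) by (apply (above_last_zero x c); fold m; lia).
      destruct (Hx (S j)); [lia|lra]. }
    apply Rmult_le_pos; [apply IH; lia|].
    apply Rmult_le_pos; [apply pos_INR|].
    apply Rlt_le, Rinv_0_lt_compat, Rmult_lt_0_compat; [nra|exact Hpos].
Qed.

Lemma weight_balance j : (1 <= j <= c)%nat ->
  weight m j * lam * x j = weight m (j - 1) * INR (c - j + 1) / d.
Proof.
  intros Hj. assert (Hm : (m <= c)%nat) by apply last_zero_le.
  destruct (Nat.lt_ge_cases j m).
  - rewrite !weight_below by lia. unfold Rdiv; ring.
  - destruct (Nat.eq_dec j m) as [E|E].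
    + destruct (last_zero_spec x c) as [E0|E0]; fold m in E0; [lia|].
      rewrite E, E0, (weight_below m (m - 1)) by lia. unfold Rdiv; ring.
    + destruct j as [|j]; [lia|]. rewrite weight_above by lia.
      replace (S j - 1)%nat with j by lia.
      assert (0 < x (S j)).
      { assert (x (S j) <> 0) by (apply (above_last_zero x c); fold m; lia).
        destruct (Hx (S j)); [lia|lra]. }
      field. repeat split; lra.
Qed.

Lemma steady_state_exists : exists pi, is_steady_state c lam d x pi.
Proof.
  set (Z := sum_f_R0 (weight m) c).
  assert (HZ : 1 <= Z).
  { rewrite <- (weight_at m). apply term_le_sum; [apply weight_nonneg|apply last_zero_le]. }
  exists (fun j => weight m j / Z). split; [|split].
  - intros j Hj. apply Rdiv_le_0_compat; [apply weight_nonneg; auto|lra].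
  - unfold Rdiv. rewrite <- scal_sum. fold Z. field. lra.
  - intros j Hj. unfold Rdiv.
    replace (weight m j * / Z * lam * x j) with ((weight m j * lam * x j) / Z) by (field; lra).
    rewrite weight_balance by auto. field. lra.
Qed.

End SteadyState.

Lemma steady_state_spec c lam d x : 0 < lam -> 0 < d -> policy c x ->
  is_steady_state c lam d x (steady_state c lam d x).
Proof.
  intros. unfold steady_state. apply epsilon_spec. now apply steady_state_exists.
Qed.

(** Write [A = sum_j j pi_j] for the mean number of
    available units and [gap z = g xs + s (z - xs) - g z >= 0] for the gap
    between [g] and its tangent line at [xs].  Little's law gives the
    throughput [lam sum_j pi_j x_j = (c - A) / d], and with [lam xs d = c]
    the loss splits into nonnegative parts:
      [lam g xs - R = lam (pi_0 gap 0 + sum_(j>=1) pi_j gap x_j) + s A / d]. *)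

Definition mean_stock (c : nat) (pi : nat -> R) : R :=
  sum_f_R0 (fun j => INR j * pi j) c.

Definition gap (g : R -> R) (xs s z : R) : R := g xs + s * (z - xs) - g z.

Lemma gap_nonneg g xs s z : supergradient g xs s -> 0 <= z <= 1 -> 0 <= gap g xs s z.
Proof. intros Hsg Hz. unfold gap. pose proof (Hsg z Hz). lra. Qed.

Lemma mean_stock_nonneg c lam d x pi : is_steady_state c lam d x pi -> 0 <= mean_stock c pi.
Proof.
  intros [Hp _].
  apply sum_nonneg. intros; apply Rmult_le_pos; [apply pos_INR|apply Hp; lia].
Qed.

Lemma arrival_rate_pos c lam d xs :
  (1 <= c)%nat -> 0 < d -> 0 < xs -> lam * xs * d = INR c -> 0 < lam.
Proof.
  intros Hc Hd Hxs Hlam. assert (0 < INR c) by (apply lt_0_INR; lia).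
  apply Rmult_lt_reg_r with (xs * d); nra.
Qed.

Lemma upper_mass_le_1 c lam d x pi : (1 <= c)%nat -> is_steady_state c lam d x pi ->
  sum_f_R0 (fun i => pi (S i)) (c - 1) <= 1.
Proof.
  intros Hc [Hp [Hs _]]. rewrite (sum_split_first pi c Hc) in Hs.
  assert (0 <= pi O) by (apply Hp; lia). lra.
Qed.

Section LossDecomposition.
Variables (c : nat) (lam d xs : R) (x pi : nat -> R).
Hypotheses (Hc : (1 <= c)%nat) (Hd : 0 < d) (Hlam : lam * xs * d = INR c).
Hypothesis Hss : is_steady_state c lam d x pi.

(* Little's law: sales rate = rate at which rented units come back. *)
Lemma throughput :
  lam * sum_f_R0 (fun i => pi (S i) * x (S i)) (c - 1) = (INR c - mean_stock c pi) / d.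
Proof.
  destruct Hss as [Hp [Hs Hb]].
  rewrite scal_sum.
  rewrite (sum_eq _ (fun i => pi i * (INR c - INR i) / d)).
  2:{ intros i Hi.
      replace (pi (S i) * x (S i) * lam) with (pi (S i) * lam * x (S i)) by ring.
      rewrite Hb by lia. replace (S i - 1)%nat with i by lia.
      rewrite INR_free_units, S_INR by lia. field. lra. }
  assert (Elast : sum_f_R0 (fun i => pi i * (INR c - INR i) / d) c =
                  sum_f_R0 (fun i => pi i * (INR c - INR i) / d) (c - 1)).
  { rewrite sum_split_last by auto. unfold Rminus. rewrite Rplus_opp_r. unfold Rdiv. ring. }
  rewrite <- Elast. unfold mean_stock.
  rewrite (sum_eq _ (fun i => (INR c / d) * pi i + (- / d) * (INR i * pi i)))
    by (intros; field; lra).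
  rewrite sum_lin, Hs. field. lra.
Qed.

Lemma loss_decomposition (g : R -> R) (s : R) : g 0 = 0 ->
  lam * g xs - sum_f 1 c (fun j => pi j * lam * g (x j)) =
  lam * (pi O * gap g xs s 0 + sum_f_R0 (fun i => pi (S i) * gap g xs s (x (S i))) (c - 1))
  + s * mean_stock c pi / d.
Proof.
  intros Hg0. pose proof throughput as Hthr.
  destruct Hss as [_ [Hs _]].
  rewrite sum_from_1 by auto. rewrite (sum_split_first pi c Hc) in Hs.
  set (P := sum_f_R0 (fun i => pi (S i)) (c - 1)) in *.
  set (Y := sum_f_R0 (fun i => pi (S i) * x (S i)) (c - 1)) in *.
  set (G := sum_f_R0 (fun i => pi (S i) * g (x (S i))) (c - 1)).
  assert (EG : sum_f_R0 (fun i => pi (S i) * lam * g (x (S i))) (c - 1) = lam * G).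
  { unfold G. rewrite scal_sum. apply sum_eq; intros; ring. }
  assert (Egap : sum_f_R0 (fun i => pi (S i) * gap g xs s (x (S i))) (c - 1) =
                 (g xs - s * xs) * P + s * Y - G).
  { unfold P, Y, G. rewrite <- sum_lin, <- minus_sum. apply sum_eq. intros; unfold gap; ring. }
  rewrite EG, Egap. unfold gap. rewrite Hg0.
  assert (Hlx : lam * xs = INR c / d) by (field_simplify_eq; lra).
  replace P with (1 - pi O) by lra.
  replace (s * mean_stock c pi / d) with (s * (INR c / d) - s * (lam * Y)) by (rewrite Hthr; field; lra).
  rewrite <- Hlx. ring.
Qed.

End LossDecomposition.

(* Both parts of the loss decomposition are nonnegative, so each is bounded
   by the loss itself. *)
Lemma loss_parts_le c lam d xs g s x pi :
  (1 <= c)%nat -> 0 < d -> lam * xs * d = INR c -> 0 < lam -> reward_function g -> 0 <= s ->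
  supergradient g xs s -> policy c x -> is_steady_state c lam d x pi ->
  s * mean_stock c pi / d <= lam * g xs - sum_f 1 c (fun j => pi j * lam * g (x j)) /\
  lam * sum_f_R0 (fun i => pi (S i) * gap g xs s (x (S i))) (c - 1)
    <= lam * g xs - sum_f 1 c (fun j => pi j * lam * g (x j)).
Proof.
  intros Hc Hd Hlam Hlampos Hg Hs Hsg Hx Hss.
  rewrite (loss_decomposition c lam d xs x pi Hc Hd Hlam Hss g s (proj1 Hg)).
  pose proof Hss as [Hp _].
  set (Sgap := sum_f_R0 (fun i => pi (S i) * gap g xs s (x (S i))) (c - 1)).
  assert (HS : 0 <= Sgap).
  { apply sum_nonneg. intros i Hi.
    apply Rmult_le_pos; [apply Hp; lia|apply gap_nonneg; auto; apply Hx; lia]. }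
  assert (H0 : 0 <= lam * (pi O * gap g xs s 0)).
  { apply Rmult_le_pos; [lra|]. apply Rmult_le_pos; [apply Hp; lia|apply gap_nonneg; auto; lra]. }
  assert (HA : 0 <= s * mean_stock c pi / d).
  { pose proof (mean_stock_nonneg c lam d x pi Hss).
    apply Rdiv_le_0_compat; [apply Rmult_le_pos|]; lra. }
  assert (0 <= lam * Sgap) by (apply Rmult_le_pos; lra).
  rewrite Rmult_plus_distr_l. split; lra.
Qed.

(* Under the local upper curvature bound of Assumption 2, concavity turns the
   gap at any [z] into a bound on the distance [|z - xs|] at scale [eta]:
   moving from [xs] towards [z] by [eta] already costs [k2 eta^alpha]. *)
Lemma distance_by_gap g xs s eps k2 alpha eta z :
  reward_function g -> supergradient g xs s -> 0 < xs < 1 -> 0 < k2 ->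
  (forall x, xs - eps <= x <= xs + eps ->
     g x <= g xs + s * (x - xs) - k2 * rpow (Rabs (x - xs)) alpha) ->
  0 < eta <= eps -> 0 <= z <= 1 ->
  Rabs (z - xs) <= eta + gap g xs s z * eta / (k2 * Rpower eta alpha).
Proof.
  intros [_ [_ Hconc]] Hsg Hxs Hk2 Hloc Heta Hz.
  pose proof (gap_nonneg g xs s z Hsg Hz) as Hgap.
  pose proof (Rpower_pos eta alpha) as Hpow.
  assert (0 <= gap g xs s z * eta / (k2 * Rpower eta alpha)).
  { apply Rdiv_le_0_compat; nra. }
  set (t := Rabs (z - xs)).
  destruct (Rle_dec t eta) as [|Hgt]; [lra|]. apply Rnot_le_lt in Hgt.
  (* [w] is the point at distance [eta] from [xs] on the segment [xs, z]. *)
  set (theta := eta / t).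
  assert (Htheta : 0 < theta < 1).
  { unfold theta. split; [apply Rdiv_lt_0_compat; lra|].
    apply Rmult_lt_reg_r with t; [lra|]. field_simplify; lra. }
  set (w := theta * z + (1 - theta) * xs).
  assert (Hw : w - xs = theta * (z - xs)) by (unfold w; ring).
  assert (Hdist : Rabs (w - xs) = eta).
  { rewrite Hw, Rabs_mult, (Rabs_pos_eq theta) by lra. fold t. unfold theta. field. lra. }
  assert (Hwin : xs - eps <= w <= xs + eps).
  { pose proof (Rle_abs (w - xs)). pose proof (Rle_abs (- (w - xs))).
    rewrite Rabs_Ropp in *. lra. }
  pose proof (Hloc w Hwin) as Hup. rewrite Hdist, rpow_pos_eq in Hup by lra.
  pose proof (Hconc z xs theta Hz ltac:(lra) ltac:(lra)) as Hlow. fold w in Hlow.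
  assert (Hcost : k2 * Rpower eta alpha * t <= eta * gap g xs s z).
  { assert (k2 * Rpower eta alpha <= theta * gap g xs s z) by (unfold gap; rewrite Hw in Hup; nra).
    replace (eta * gap g xs s z) with (theta * gap g xs s z * t) by (unfold theta; field; lra).
    apply Rmult_le_compat_r; lra. }
  assert (t <= gap g xs s z * eta / (k2 * Rpower eta alpha)).
  { apply Rmult_le_reg_r with (k2 * Rpower eta alpha); [nra|].
    replace (gap g xs s z * eta / (k2 * Rpower eta alpha) * (k2 * Rpower eta alpha))
      with (eta * gap g xs s z) by (field; nra).
    lra. }
  lra.
Qed.

Lemma slope_pos g xs alpha s1 s2 :
  1 < alpha -> 0 < s1 -> assumption1 g xs alpha s1 -> assumption2 g xs alpha s2 -> 0 < s2.
Proof.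
  intros Ha Hs1 [e1 [k1 [He1 [_ [Hk1 [_ [_ H1]]]]]]] [e2 [k2 [He2 [_ [Hk2 [_ [_ H2]]]]]]].
  (* At [xs + t], with [t] small, [k1 t^(alpha-1) <= s1 / 2] and the bounds give
     [s1 t / 2 <= s1 t - k1 t^alpha <= s2 t - k2 t^alpha < s2 t]. *)
  set (B := s1 / (2 * (k1 + 1))).
  assert (HB : 0 < B) by (unfold B; apply Rdiv_lt_0_compat; lra).
  set (t := Rmin (Rmin e1 e2) (Rpower B (1 / (alpha - 1)))).
  assert (Ht : 0 < t) by (apply Rmin_glb_lt; [apply Rmin_glb_lt; lra|apply Rpower_pos]).
  assert (Ht1 : t <= e1) by (eapply Rle_trans; [apply Rmin_l|apply Rmin_l]).
  assert (Ht2 : t <= e2) by (eapply Rle_trans; [apply Rmin_l|apply Rmin_r]).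
  assert (HtB : Rpower t (alpha - 1) <= B).
  { replace B with (Rpower (Rpower B (1 / (alpha - 1))) (alpha - 1)).
    - apply Rle_Rpower_l; [lra|]. split; [lra|apply Rmin_r].
    - rewrite Rpower_mult. replace (1 / (alpha - 1) * (alpha - 1)) with 1 by (field; lra).
      apply Rpower_1; auto. }
  assert (Hta : Rpower t alpha = t * Rpower t (alpha - 1)).
  { replace alpha with (1 + (alpha - 1)) at 1 by ring. rewrite Rpower_plus, Rpower_1; auto. }
  assert (Habs : Rabs (xs + t - xs) = t).
  { replace (xs + t - xs) with t by ring. apply Rabs_pos_eq; lra. }
  specialize (H1 (xs + t) ltac:(lra)). specialize (H2 (xs + t) ltac:(lra)).
  rewrite Habs, rpow_pos_eq in H1, H2 by auto.
  pose proof (Rpower_pos t alpha).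
  assert (k1 * Rpower t alpha <= t * (s1 / 2)).
  { rewrite Hta. assert (k1 * Rpower t (alpha - 1) <= s1 / 2).
    { apply Rle_trans with ((k1 + 1) * B); [nra|]. unfold B; right; field; lra. }
    nra. }
  nra.
Qed.

Lemma balance_scaled c lam d xs x pi :
  0 < d -> lam * xs * d = INR c -> is_steady_state c lam d x pi ->
  forall j, (1 <= j <= c)%nat -> pi j * x j * INR c = pi (j - 1)%nat * INR (c - j + 1) * xs.
Proof.
  intros Hd Hlam [_ [_ Hb]] j Hj. rewrite <- Hlam.
  replace (pi j * x j * (lam * xs * d)) with ((pi j * lam * x j) * (xs * d)) by ring.
  rewrite Hb by auto. field. lra.
Qed.

(** A stationary distribution
    whose admission probabilities stay close to [xs] cannot be concentrated:
    along the balance equations [pi_(n+1)] can only fall below [pi_n] by the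
    increment of [potential] below, which sums the deviations
    [|x_j - xs|] and the mean stock.  If both are small, [pi] is nearly flat
    on a window of length [N], which is incompatible with a small mean stock. *)

Section Spreading.
Variables (c : nat) (lam d xs : R) (x pi : nat -> R).
Hypotheses (Hc : (1 <= c)%nat) (Hd : 0 < d) (Hxs : 0 < xs).
Hypotheses (Hlam : lam * xs * d = INR c) (Hss : is_steady_state c lam d x pi).

Fixpoint potential (n : nat) : R :=
  match n with
  | O => 0
  | S n => potential n + pi (S n) * Rabs (x (S n) - xs) / xs + INR n * pi n / INR c
  end.

Definition deviation : R := sum_f_R0 (fun i => pi (S i) * Rabs (x (S i) - xs)) (c - 1).

Let Hcpos : 0 < INR c := lt_0_INR c Hc.

Lemma potential_mono n m : (n <= m <= c)%nat -> potential n <= potential m.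
Proof.
  destruct Hss as [Hp _]. intros [Hnm Hmc].
  induction Hnm as [|m Hnm IH]; [lra|]. cbn [potential].
  assert (0 <= pi (S m) * Rabs (x (S m) - xs) / xs).
  { apply Rdiv_le_0_compat; [apply Rmult_le_pos; [apply Hp; lia|apply Rabs_pos]|lra]. }
  assert (0 <= INR m * pi m / INR c).
  { apply Rdiv_le_0_compat; [apply Rmult_le_pos; [apply pos_INR|apply Hp; lia]|lra]. }
  assert (potential n <= potential m) by (apply IH; lia).
  lra.
Qed.

Lemma potential_step n : (S n <= c)%nat -> pi n + potential n <= pi (S n) + potential (S n).
Proof.
  destruct Hss as [Hp _]. intros Hn. cbn [potential].
  pose proof (balance_scaled c lam d xs x pi Hd Hlam Hss (S n) ltac:(lia)) as Hb.
  replace (S n - 1)%nat with n in Hb by lia.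
  rewrite INR_free_units, S_INR in Hb by lia.
  assert (Hflow : xs * pi n = pi (S n) * x (S n) + xs * INR n * pi n / INR c).
  { apply (Rmult_eq_reg_l (INR c)); [|lra].
    replace (INR c * (pi (S n) * x (S n) + xs * INR n * pi n / INR c))
      with (pi (S n) * x (S n) * INR c + xs * INR n * pi n) by (field; lra).
    rewrite Hb. ring. }
  assert (0 <= pi (S n)) by (apply Hp; lia).
  assert (pi (S n) * x (S n) <= pi (S n) * (xs + Rabs (x (S n) - xs))).
  { apply Rmult_le_compat_l; auto. pose proof (Rle_abs (x (S n) - xs)). lra. }
  apply Rmult_le_reg_l with xs; [lra|].
  replace (xs * (pi (S n) + (potential n + pi (S n) * Rabs (x (S n) - xs) / xs
                              + INR n * pi n / INR c)))
    with (xs * potential n + pi (S n) * (xs + Rabs (x (S n) - xs))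
          + xs * INR n * pi n / INR c) by (field; lra).
  lra.
Qed.

Lemma almost_increasing k n : (k <= n <= c)%nat -> pi k - potential c <= pi n.
Proof.
  intros [Hkn Hnc].
  assert (pi k + potential k <= pi n + potential n).
  { induction Hkn as [|m Hkm IH]; [lra|].
    pose proof (potential_step m ltac:(lia)). assert (pi k + potential k <= pi m + potential m)
      by (apply IH; lia). lra. }
  assert (0 <= potential k) by (apply (potential_mono 0 k); lia).
  assert (potential n <= potential c) by (apply potential_mono; lia).
  lra.
Qed.

Lemma potential_closed n :
  potential (S n) = / xs * sum_f_R0 (fun i => pi (S i) * Rabs (x (S i) - xs)) n
                    + / INR c * sum_f_R0 (fun i => INR i * pi i) n.
Proof.
  induction n as [|n IH]; cbn [potential sum_f_R0].
  - rewrite INR_0. field. lra.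
  - cbn [potential] in IH. rewrite IH. field. lra.
Qed.

Lemma potential_bound : potential c <= deviation / xs + mean_stock c pi / INR c.
Proof.
  destruct Hss as [Hp _].
  replace c with (S (c - 1)) at 1 by lia. rewrite potential_closed.
  assert (sum_f_R0 (fun i => INR i * pi i) (c - 1) <= mean_stock c pi).
  { apply sum_le_longer; [|lia]. intros; apply Rmult_le_pos; [apply pos_INR|apply Hp; lia]. }
  assert (0 < / INR c) by (apply Rinv_0_lt_compat; lra).
  unfold deviation, Rdiv. rewrite (Rmult_comm _ (/ xs)), (Rmult_comm _ (/ INR c)). nra.
Qed.

(* A high value of [pi] on the first [N] states persists on a window of [N]
   states, which carries mean stock at least [N (N + 1) / 2] times that value. *)
Lemma window_mass N k : (k <= N)%nat -> (N + N <= c)%nat ->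
  (pi k - potential c) * (INR N * (INR N + 1) / 2) <= mean_stock c pi.
Proof.
  destruct Hss as [Hp _]. intros Hk HN.
  rewrite <- sum_id_INR, scal_sum.
  apply Rle_trans with (sum_f_R0 (fun i => INR (k + i) * pi (k + i)%nat) N).
  - apply sum_Rle. intros i Hi.
    assert (pi k - potential c <= pi (k + i)%nat) by (apply almost_increasing; lia).
    assert (0 <= pi (k + i)%nat) by (apply Hp; lia).
    assert (INR i <= INR (k + i)) by (apply le_INR; lia).
    pose proof (pos_INR i). nra.
  - apply (window_le_sum (fun j => INR j * pi j)); [|lia].
    intros; apply Rmult_le_pos; [apply pos_INR|apply Hp; lia].
Qed.

(* Markov's inequality: the states above [N] carry mass at most [A / (N + 1)]. *)
Lemma low_states_mass N : (N < c)%nat ->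
  1 <= sum_f_R0 pi N + mean_stock c pi / (INR N + 1).
Proof.
  destruct Hss as [Hp [Hs _]]. intros HN.
  rewrite (tech2 pi N c HN) in Hs.
  pose proof (pos_INR N).
  assert (sum_f_R0 (fun i => pi (S N + i)%nat) (c - S N) * (INR N + 1) <= mean_stock c pi).
  { rewrite Rmult_comm, scal_sum.
    apply Rle_trans with (sum_f_R0 (fun i => INR (S N + i) * pi (S N + i)%nat) (c - S N)).
    - apply sum_Rle; intros i Hi. assert (0 <= pi (S N + i)%nat) by (apply Hp; lia).
      assert (INR N + 1 <= INR (S N + i)) by (rewrite <- S_INR; apply le_INR; lia). nra.
    - apply (window_le_sum (fun j => INR j * pi j)); [|lia].
      intros; apply Rmult_le_pos; [apply pos_INR|apply Hp; lia]. }
  assert (sum_f_R0 (fun i => pi (S N + i)%nat) (c - S N) <= mean_stock c pi / (INR N + 1)).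
  { apply Rmult_le_reg_r with (INR N + 1); [lra|]. field_simplify; lra. }
  lra.
Qed.

Lemma spreading N : (1 <= N)%nat -> (N + N <= c)%nat ->
  1 <= (INR N + 1) * (deviation / xs + mean_stock c pi / INR c)
       + 3 * mean_stock c pi / INR N.
Proof.
  intros HN1 HNc. pose proof (low_states_mass N ltac:(lia)) as Hlow.
  assert (HN : 1 <= INR N) by (apply (le_INR 1); auto).
  assert (HA : 0 <= mean_stock c pi) by (eapply mean_stock_nonneg; eauto).
  pose proof potential_bound as Hpot.
  set (A := mean_stock c pi) in *.
  assert (Hhigh : sum_f_R0 pi N <= sum_f_R0 (fun _ => potential c + 2 * A / (INR N * (INR N + 1))) N).
  { apply sum_Rle. intros k Hk. pose proof (window_mass N k Hk HNc) as Hwin.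
    rewrite Rmult_minus_distr_r in Hwin. fold A in Hwin.
    assert (Hw : 0 < INR N * (INR N + 1) / 2) by nra.
    apply Rmult_le_reg_r with (INR N * (INR N + 1) / 2); [exact Hw|].
    replace ((potential c + 2 * A / (INR N * (INR N + 1))) * (INR N * (INR N + 1) / 2))
      with (potential c * (INR N * (INR N + 1) / 2) + A) by (field; lra).
    lra. }
  rewrite sum_cte, S_INR in Hhigh.
  replace ((potential c + 2 * A / (INR N * (INR N + 1))) * (INR N + 1))
    with ((INR N + 1) * potential c + 2 * A / INR N) in Hhigh by (field; lra).
  assert (A / (INR N + 1) <= A / INR N) by (apply Rmult_le_compat_l; [lra|apply Rinv_le_contravar; lra]).
  assert ((INR N + 1) * potential c <= (INR N + 1) * (deviation / xs + A / INR c))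
    by (apply Rmult_le_compat_l; lra).
  unfold Rdiv in *. lra.
Qed.

(* At scale [gam] with [gam^2 <= c], taking [N] the integer in [(gam, gam + 1]]. *)
Lemma spreading_at_scale gam : 1 <= gam -> 2 * gam + 2 <= INR c -> gam * gam <= INR c ->
  1 <= 3 * gam * deviation / xs + 6 * mean_stock c pi / gam.
Proof.
  intros Hg1 Hgc Hgg.
  destruct (nat_of_up gam) as [N [HN1 HN2]]; [lra|].
  assert (HN : (1 <= N)%nat) by (apply INR_le; simpl; lra).
  assert (HNc : (N + N <= c)%nat) by (apply INR_le; rewrite plus_INR; lra).
  pose proof (spreading N HN HNc) as Hspread.
  assert (HA : 0 <= mean_stock c pi) by (eapply mean_stock_nonneg; eauto).
  assert (HT : 0 <= deviation).
  { destruct Hss as [Hp _]. apply sum_nonneg. intros i Hi.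
    apply Rmult_le_pos; [apply Hp; lia|apply Rabs_pos]. }
  set (A := mean_stock c pi) in *. set (T := deviation) in *.
  assert ((INR N + 1) * (T / xs) <= 3 * gam * T / xs).
  { replace (3 * gam * T / xs) with (3 * gam * (T / xs)) by (unfold Rdiv; ring).
    apply Rmult_le_compat_r; [apply Rdiv_le_0_compat|]; lra. }
  assert ((INR N + 1) * (A / INR c) <= 3 * A / gam).
  { apply Rle_trans with (3 * gam * (A / INR c)).
    - apply Rmult_le_compat_r; [apply Rdiv_le_0_compat|]; lra.
    - apply Rmult_le_reg_r with (INR c * gam); [nra|].
      replace (3 * gam * (A / INR c) * (INR c * gam)) with (3 * A * (gam * gam)) by (field; lra).
      replace (3 * A / gam * (INR c * gam)) with (3 * A * INR c) by (field; lra).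
      apply Rmult_le_compat_l; lra. }
  assert (3 * A / INR N <= 3 * A / gam).
  { apply Rmult_le_compat_l; [lra|]. apply Rinv_le_contravar; lra. }
  unfold Rdiv in *. lra.
Qed.

End Spreading.

(** At scale [gam] with
    [gam^(alpha+1) = c], the part [lam sum pi_j gap x_j] of the loss controls the
    total deviation (through [distance_by_gap] at distance [eta = xs / (18 gam)])
    and the part [s A / d] controls the mean stock; [spreading] with
    [N ~ gam] then forces the loss to be of order [gam]. *)

Definition lower_const (d s k2 alpha xs : R) : R :=
  (5 / 6) / (6 * d / s + 3 * d * (xs / 18) / (k2 * Rpower (xs / 18) alpha)).

Lemma lower_const_pos d s k2 alpha xs : 0 < d -> 0 < s -> 0 < k2 -> 0 < xs ->
  0 < lower_const d s k2 alpha xs.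
Proof.
  intros Hd Hs Hk2 Hxs. pose proof (Rpower_pos (xs / 18) alpha).
  unfold lower_const. apply Rdiv_lt_0_compat; [lra|].
  apply Rplus_lt_0_compat; apply Rdiv_lt_0_compat; nra.
Qed.

Lemma deviation_by_gaps c lam d xs alpha g s eps k2 eta x pi :
  (1 <= c)%nat -> 0 < xs < 1 -> reward_function g -> supergradient g xs s -> 0 < k2 ->
  (forall z, xs - eps <= z <= xs + eps ->
     g z <= g xs + s * (z - xs) - k2 * rpow (Rabs (z - xs)) alpha) ->
  0 < eta <= eps -> policy c x -> is_steady_state c lam d x pi ->
  deviation c xs x pi <= eta + eta / (k2 * Rpower eta alpha)
    * sum_f_R0 (fun i => pi (S i) * gap g xs s (x (S i))) (c - 1).
Proof.
  intros Hc Hxs Hg Hsg Hk2 Hloc Heta Hx Hss. pose proof Hss as [Hp _].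
  pose proof (Rpower_pos eta alpha).
  apply Rle_trans with (sum_f_R0 (fun i => eta * pi (S i)
     + (eta / (k2 * Rpower eta alpha)) * (pi (S i) * gap g xs s (x (S i)))) (c - 1)).
  - apply sum_Rle. intros i Hi.
    pose proof (distance_by_gap g xs s eps k2 alpha eta (x (S i)) Hg Hsg Hxs Hk2 Hloc Heta
                  (Hx (S i) ltac:(lia))) as Hdist.
    assert (0 <= pi (S i)) by (apply Hp; lia).
    apply Rmult_le_compat_l with (r := pi (S i)) in Hdist; auto.
    replace (eta * pi (S i) + eta / (k2 * Rpower eta alpha) * (pi (S i) * gap g xs s (x (S i))))
      with (pi (S i) * (eta + gap g xs s (x (S i)) * eta / (k2 * Rpower eta alpha)))
      by (field; nra).
    exact Hdist.
  - rewrite sum_lin. pose proof (upper_mass_le_1 c lam d x pi Hc Hss).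
    assert (eta * sum_f_R0 (fun i => pi (S i)) (c - 1) <= eta) by nra.
    lra.
Qed.

Lemma deviation_at_scale c lam d xs alpha g s eps k2 gam x pi :
  (1 <= c)%nat -> 0 < xs < 1 -> reward_function g -> supergradient g xs s -> 0 < k2 ->
  (forall z, xs - eps <= z <= xs + eps ->
     g z <= g xs + s * (z - xs) - k2 * rpow (Rabs (z - xs)) alpha) ->
  1 <= gam -> Rpower gam alpha * gam = INR c -> xs / 18 / gam <= eps ->
  policy c x -> is_steady_state c lam d x pi ->
  3 * gam * deviation c xs x pi / xs <= 1 / 6 +
    3 * (xs / 18) * INR c / (k2 * Rpower (xs / 18) alpha * gam * xs)
    * sum_f_R0 (fun i => pi (S i) * gap g xs s (x (S i))) (c - 1).
Proof.
  intros Hc Hxs Hg Hsg Hk2 Hloc Hg1 Hpow Heps Hx Hss.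
  set (kap := xs / 18). assert (Hkap : 0 < kap) by (unfold kap; lra).
  set (eta := kap / gam).
  assert (Heta : 0 < eta <= eps) by (split; [apply Rdiv_lt_0_compat; lra|exact Heps]).
  assert (Hcpos : 0 < INR c) by (apply lt_0_INR; lia).
  pose proof (Rpower_pos gam alpha). pose proof (Rpower_pos kap alpha).
  assert (Hpow_eta : Rpower eta alpha = Rpower kap alpha * gam / INR c).
  { unfold eta, Rdiv. rewrite <- Rpower_mult_distr by (try apply Rinv_0_lt_compat; lra).
    rewrite Rpower_inv by lra. rewrite <- Hpow. field. lra. }
  pose proof (deviation_by_gaps c lam d xs alpha g s eps k2 eta x pi Hc Hxs Hg Hsg Hk2 Hloc
                Heta Hx Hss) as HT.
  rewrite Hpow_eta in HT.
  set (Sgap := sum_f_R0 (fun i => pi (S i) * gap g xs s (x (S i))) (c - 1)) in *.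
  apply Rle_trans with (3 * gam / xs * (eta + eta / (k2 * (Rpower kap alpha * gam / INR c)) * Sgap)).
  - replace (3 * gam * deviation c xs x pi / xs) with (3 * gam / xs * deviation c xs x pi)
      by (field; lra).
    apply Rmult_le_compat_l; [apply Rdiv_le_0_compat|]; lra.
  - right. replace (1 / 6) with (3 * kap / xs) by (unfold kap; field; lra).
    unfold eta. field. repeat split; lra.
Qed.

Lemma loss_lower_bound c lam d xs alpha g s eps k2 gam x pi :
  (1 <= c)%nat -> 0 < d -> 0 < xs < 1 -> lam * xs * d = INR c ->
  reward_function g -> 0 < s -> supergradient g xs s -> 0 < k2 ->
  (forall z, xs - eps <= z <= xs + eps ->
     g z <= g xs + s * (z - xs) - k2 * rpow (Rabs (z - xs)) alpha) ->
  1 <= gam -> 2 * gam + 2 <= INR c -> gam * gam <= INR c ->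
  Rpower gam alpha * gam = INR c -> xs / 18 / gam <= eps ->
  policy c x -> is_steady_state c lam d x pi ->
  lower_const d s k2 alpha xs * gam <= lam * g xs - sum_f 1 c (fun j => pi j * lam * g (x j)).
Proof.
  intros Hc Hd Hxs Hlam Hg Hs Hsg Hk2 Hloc Hg1 Hgc Hgg Hpow Heps Hx Hss.
  pose proof (arrival_rate_pos c lam d xs Hc Hd (proj1 Hxs) Hlam) as Hlampos.
  pose proof (spreading_at_scale c lam d xs x pi Hc Hd ltac:(lra) Hlam Hss gam Hg1 Hgc Hgg) as H1.
  pose proof (deviation_at_scale c lam d xs alpha g s eps k2 gam x pi Hc Hxs Hg Hsg Hk2 Hloc
                Hg1 Hpow Heps Hx Hss) as H2.
  destruct (loss_parts_le c lam d xs g s x pi Hc Hd Hlam Hlampos Hg ltac:(lra) Hsg Hx Hss)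
    as [HAL HSL].
  set (L := lam * g xs - sum_f 1 c (fun j => pi j * lam * g (x j))) in *.
  set (Sgap := sum_f_R0 (fun i => pi (S i) * gap g xs s (x (S i))) (c - 1)) in *.
  set (A := mean_stock c pi) in *.
  unfold lower_const. set (kap := xs / 18) in *.
  assert (Hkap : 0 < kap) by (unfold kap; lra). pose proof (Rpower_pos kap alpha).
  (* Both terms of [H1 + H2] are multiples of the parts of the loss. *)
  assert (HA : 6 * A / gam <= 6 * d / s / gam * L).
  { replace (6 * A / gam) with (6 * d / s / gam * (s * A / d)) by (field; lra).
    apply Rmult_le_compat_l; [|exact HAL].
    apply Rdiv_le_0_compat; [apply Rdiv_le_0_compat|]; lra. }
  assert (HS : 3 * kap * INR c / (k2 * Rpower kap alpha * gam * xs) * Sgap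
               <= 3 * d * kap / (k2 * Rpower kap alpha) / gam * L).
  { replace (3 * kap * INR c / (k2 * Rpower kap alpha * gam * xs) * Sgap)
      with (3 * d * kap / (k2 * Rpower kap alpha) / gam * (lam * Sgap))
      by (rewrite <- Hlam; field; repeat split; lra).
    apply Rmult_le_compat_l; [|exact HSL].
    apply Rdiv_le_0_compat; [apply Rdiv_le_0_compat|]; nra. }
  set (C := 6 * d / s + 3 * d * kap / (k2 * Rpower kap alpha)).
  assert (HC : 0 < C) by (apply Rplus_lt_0_compat; apply Rdiv_lt_0_compat; nra).
  apply Rmult_le_reg_l with (C / gam); [apply Rdiv_lt_0_compat; lra|].
  replace (C / gam * (5 / 6 / C * gam)) with (5 / 6) by (field; lra).
  replace (C / gam * L) with (6 * d / s / gam * L + 3 * d * kap / (k2 * Rpower kap alpha) / gam * L)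
    by (unfold C; field; repeat split; lra).
  lra.
Qed.

(** When at most [tau <= delta c / (2 xs)] units are available, selling at the
    low price drains the stock slower than returns refill it, so [pi] grows
    geometrically with ratio [1 / rho], [rho = 1 - delta / (2 xs)], below
    [tau]: the stock-out probability is at most [rho^tau].  Above [tau] the
    high price makes [pi] decay with ratio [xs / (xs + delta)], so the mean
    stock exceeds [tau] by at most [xs / delta]. *)

Definition excess (tau j : nat) : R := Rmax 0 (INR j - INR tau).

Section TwoPrice.
Variables (c : nat) (lam d xs delta : R) (tau : nat) (pi : nat -> R).
Hypotheses (Hc : (1 <= c)%nat) (Hd : 0 < d) (Hxs : 0 < xs < 1).
Hypotheses (Hlam : lam * xs * d = INR c) (Hdel : 0 < delta <= xs / 2).
Hypotheses (Htau : (1 <= tau <= c)%nat) (Htc : 2 * xs * INR tau <= delta * INR c).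
Hypothesis Hss : is_steady_state c lam d (two_price (xs - delta) (xs + delta) tau) pi.

Let Hcpos : 0 < INR c := lt_0_INR c Hc.

Lemma balance_two_price j : (1 <= j <= c)%nat ->
  pi j * two_price (xs - delta) (xs + delta) tau j * INR c
  = pi (j - 1)%nat * (INR c - INR j + 1) * xs.
Proof.
  intros Hj. rewrite <- INR_free_units by auto. now apply (balance_scaled c lam d).
Qed.

Lemma geometric_growth_low j : (1 <= j <= tau)%nat ->
  pi (j - 1)%nat <= (1 - delta / (2 * xs)) * pi j.
Proof.
  intros Hj. pose proof (balance_two_price j ltac:(lia)) as Hb.
  unfold two_price in Hb. replace (j <=? tau)%nat with true in Hb
    by (symmetry; apply Nat.leb_le; lia).
  destruct Hss as [Hp _].
  assert (0 <= pi j) by (apply Hp; lia). assert (0 <= pi (j - 1)%nat) by (apply Hp; lia).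
  assert (INR j <= INR tau) by (apply le_INR; lia).
  assert (1 <= INR tau) by (apply (le_INR 1); lia).
  assert (Hroom : 0 < (INR c - INR tau) * xs) by nra.
  (* [(xs - delta) c <= rho (c - tau) xs] because [2 xs tau <= delta c]. *)
  assert (Hrate : (xs - delta) * INR c <= (1 - delta / (2 * xs)) * (INR c - INR tau) * xs).
  { replace ((1 - delta / (2 * xs)) * (INR c - INR tau) * xs) with
      (xs * INR c - xs * INR tau - delta * INR c / 2 + delta * INR tau / 2) by (field; lra).
    nra. }
  apply Rmult_le_reg_r with ((INR c - INR tau) * xs); [exact Hroom|].
  apply Rle_trans with (pi j * (xs - delta) * INR c).
  - rewrite Hb, Rmult_assoc. apply Rmult_le_compat_l; [lra|].
    apply Rmult_le_compat_r; lra.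
  - replace (pi j * (xs - delta) * INR c) with (pi j * ((xs - delta) * INR c)) by ring.
    replace ((1 - delta / (2 * xs)) * pi j * ((INR c - INR tau) * xs))
      with (pi j * ((1 - delta / (2 * xs)) * (INR c - INR tau) * xs)) by ring.
    apply Rmult_le_compat_l; lra.
Qed.

Lemma stockout_bound : pi O <= (1 - delta / (2 * xs)) ^ tau.
Proof.
  destruct Hss as [Hp [Hs _]].
  set (rho := 1 - delta / (2 * xs)).
  assert (Hrho : 0 <= rho).
  { unfold rho. assert (delta / (2 * xs) <= 1 / 4).
    { apply Rmult_le_reg_r with (2 * xs); [lra|]. field_simplify; lra. }
    lra. }
  assert (Hdown : forall k, (k <= tau)%nat -> pi (tau - k)%nat <= rho ^ k * pi tau).
  { induction k as [|k IH]; intros Hk.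
    - rewrite Nat.sub_0_r. simpl; lra.
    - pose proof (geometric_growth_low (tau - k) ltac:(lia)) as Hstep.
      replace (tau - k - 1)%nat with (tau - S k)%nat in Hstep by lia.
      apply Rle_trans with (rho * pi (tau - k)%nat); [exact Hstep|].
      simpl. rewrite Rmult_assoc. apply Rmult_le_compat_l; [exact Hrho|]. apply IH; lia. }
  specialize (Hdown tau (le_n _)). rewrite Nat.sub_diag in Hdown.
  assert (pi tau <= 1) by (rewrite <- Hs; apply term_le_sum; [auto|lia]).
  pose proof (pow_le rho tau Hrho). nra.
Qed.

Lemma excess_decay j : (1 <= j <= c)%nat ->
  excess tau j * pi j <= xs / (xs + delta) * ((excess tau (j - 1)%nat + 1) * pi (j - 1)%nat).
Proof.
  intros Hj. destruct Hss as [Hp _].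
  assert (0 <= pi j) by (apply Hp; lia). assert (0 <= pi (j - 1)%nat) by (apply Hp; lia).
  assert (0 <= excess tau (j - 1)%nat) by apply Rmax_l.
  assert (0 <= xs / (xs + delta)) by (apply Rdiv_le_0_compat; lra).
  destruct (Nat.le_gt_cases j tau) as [Hle|Hgt].
  - unfold excess at 1. rewrite Rmax_left by (apply Rle_minus, le_INR; auto).
    rewrite Rmult_0_l. apply Rmult_le_pos; nra.
  - pose proof (balance_two_price j ltac:(lia)) as Hb.
    unfold two_price in Hb. replace (j <=? tau)%nat with false in Hb
      by (symmetry; apply Nat.leb_gt; lia).
    assert (Ef : excess tau j = excess tau (j - 1)%nat + 1).
    { unfold excess. assert (INR tau + 1 <= INR j) by (rewrite <- S_INR; apply le_INR; lia).
      rewrite minus_INR by lia. simpl. rewrite !Rmax_right; lra. }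
    assert (Hq : pi j <= xs / (xs + delta) * pi (j - 1)%nat).
    { apply Rmult_le_reg_r with ((xs + delta) * INR c); [nra|].
      replace (xs / (xs + delta) * pi (j - 1)%nat * ((xs + delta) * INR c))
        with (pi (j - 1)%nat * INR c * xs) by (field; lra).
      rewrite <- Rmult_assoc, Hb. assert (1 <= INR j) by (apply (le_INR 1); lia).
      apply Rmult_le_compat_r; [lra|]. apply Rmult_le_compat_l; lra. }
    rewrite Ef. nra.
Qed.

Lemma mean_stock_two_price : mean_stock c pi <= INR tau + xs / delta.
Proof.
  pose proof Hss as [Hp [Hs _]].
  assert (Hex : forall j, 0 <= excess tau j) by (intros; apply Rmax_l).
  set (U := sum_f_R0 (fun j => excess tau j * pi j) c).
  set (q := xs / (xs + delta)).
  assert (HU : U <= q * (U + 1)).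
  { unfold U at 1. rewrite (sum_split_first _ c Hc).
    replace (excess tau O) with 0 by (symmetry; apply Rmax_left; simpl; pose proof (pos_INR tau); lra).
    rewrite Rmult_0_l, Rplus_0_l.
    apply Rle_trans with (sum_f_R0 (fun i => (excess tau i + 1) * pi i * q) (c - 1)).
    - apply sum_Rle. intros i Hi. pose proof (excess_decay (S i) ltac:(lia)) as Hdec.
      replace (S i - 1)%nat with i in Hdec by lia. fold q in Hdec. lra.
    - rewrite <- scal_sum. apply Rmult_le_compat_l; [apply Rdiv_le_0_compat; lra|].
      replace (U + 1) with (sum_f_R0 (fun j => (excess tau j + 1) * pi j) c).
      + apply sum_le_longer; [|lia]. intros i Hi. apply Rmult_le_pos; [|apply Hp]; auto.
        specialize (Hex i). lra.
      + rewrite (sum_eq _ (fun j => excess tau j * pi j + pi j)) by (intros; ring).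
        now rewrite plus_sum, Hs. }
  assert (HU2 : U <= xs / delta).
  { apply Rmult_le_reg_r with delta; [lra|].
    replace (xs / delta * delta) with xs by (field; lra).
    apply Rmult_le_compat_r with (r := xs + delta) in HU; [|lra].
    replace (q * (U + 1) * (xs + delta)) with (xs * (U + 1)) in HU by (unfold q; field; lra).
    lra. }
  apply Rle_trans with (sum_f_R0 (fun j => INR tau * pi j + 1 * (excess tau j * pi j)) c).
  - apply sum_Rle. intros j Hj. assert (0 <= pi j) by (apply Hp; auto).
    pose proof (Rmax_r 0 (INR j - INR tau)). fold (excess tau j) in *. nra.
  - rewrite sum_lin, Hs. fold U. lra.
Qed.

End TwoPrice.

(* Both prices lie at distance [delta] from [xs], where Assumption 1 bounds
   the gap by [k1 delta^alpha]. *)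
Lemma gap_two_price g xs s eps k1 alpha delta tau j :
  0 < delta <= eps ->
  (forall z, xs - eps <= z <= xs + eps ->
     g xs + s * (z - xs) - k1 * rpow (Rabs (z - xs)) alpha <= g z) ->
  gap g xs s (two_price (xs - delta) (xs + delta) tau j) <= k1 * Rpower delta alpha.
Proof.
  intros Hdel Hloc. set (y := two_price (xs - delta) (xs + delta) tau j).
  assert (Hdist : Rabs (y - xs) = delta).
  { unfold y, two_price. destruct (j <=? tau)%nat.
    - replace (xs - delta - xs) with (- delta) by ring. rewrite Rabs_Ropp, Rabs_pos_eq; lra.
    - replace (xs + delta - xs) with delta by ring. rewrite Rabs_pos_eq; lra. }
  assert (Hin : xs - eps <= y <= xs + eps) by (unfold y, two_price; destruct (j <=? tau)%nat; lra).
  pose proof (Hloc y Hin) as Hl. rewrite Hdist, rpow_pos_eq in Hl by lra.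
  unfold gap. lra.
Qed.

(* Loss of the two-price policy: stock-outs, curvature cost at distance [delta]
   (Assumption 1), and the value [s A / d] of idle units. *)
Lemma two_price_loss c lam d xs alpha g s eps k1 delta tau pi :
  (1 <= c)%nat -> 0 < d -> 0 < xs < 1 -> lam * xs * d = INR c -> reward_function g ->
  0 <= s -> 0 <= k1 -> 0 < delta <= eps -> delta <= xs / 2 ->
  (forall z, xs - eps <= z <= xs + eps ->
     g xs + s * (z - xs) - k1 * rpow (Rabs (z - xs)) alpha <= g z) ->
  (1 <= tau <= c)%nat -> 2 * xs * INR tau <= delta * INR c ->
  is_steady_state c lam d (two_price (xs - delta) (xs + delta) tau) pi ->
  lam * g xs - sum_f 1 c (fun j => pi j * lam * g (two_price (xs - delta) (xs + delta) tau j))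
  <= lam * g xs * (1 - delta / (2 * xs)) ^ tau + lam * k1 * Rpower delta alpha
     + s * (INR tau + xs / delta) / d.
Proof.
  intros Hc Hd Hxs Hlam Hg Hs Hk1 Hdel Hdel2 Hloc Htau Htc Hss.
  pose proof Hg as [Hg0 [Hmon _]].
  rewrite (loss_decomposition c lam d xs _ pi Hc Hd Hlam Hss g s Hg0).
  pose proof (stockout_bound c lam d xs delta tau pi Hc Hd Hxs Hlam ltac:(lra) Htau Htc Hss) as Hpi0.
  pose proof (mean_stock_two_price c lam d xs delta tau pi Hc Hd Hxs Hlam ltac:(lra) Htau Hss) as HA.
  pose proof Hss as [Hp _].
  pose proof (arrival_rate_pos c lam d xs Hc Hd (proj1 Hxs) Hlam) as Hlampos.
  assert (Hgx : 0 <= g xs) by (rewrite <- Hg0; apply Hmon; lra).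
  set (y := two_price (xs - delta) (xs + delta) tau) in *.
  assert (Hstock : pi O * gap g xs s 0 <= g xs * (1 - delta / (2 * xs)) ^ tau).
  { unfold gap. rewrite Hg0. assert (0 <= pi O) by (apply Hp; lia).
    assert (pi O * (g xs + s * (0 - xs) - 0) <= pi O * g xs) by (apply Rmult_le_compat_l; nra).
    assert (pi O * g xs <= (1 - delta / (2 * xs)) ^ tau * g xs) by (apply Rmult_le_compat_r; lra).
    lra. }
  assert (Hcurv : sum_f_R0 (fun i => pi (S i) * gap g xs s (y (S i))) (c - 1)
                  <= k1 * Rpower delta alpha).
  { apply Rle_trans with (sum_f_R0 (fun i => pi (S i) * (k1 * Rpower delta alpha)) (c - 1)).
    - apply sum_Rle. intros i Hi.
      apply Rmult_le_compat_l; [apply Hp; lia|now apply (gap_two_price g xs s eps)].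
    - rewrite <- scal_sum. pose proof (Rpower_pos delta alpha).
      pose proof (upper_mass_le_1 c lam d y pi Hc Hss).
      assert (0 <= k1 * Rpower delta alpha) by (apply Rmult_le_pos; lra).
      nra. }
  assert (s * mean_stock c pi / d <= s * (INR tau + xs / delta) / d).
  { unfold Rdiv. apply Rmult_le_compat_r; [apply Rlt_le, Rinv_0_lt_compat; lra|].
    apply Rmult_le_compat_l; lra. }
  nra.
Qed.

Lemma opt_reward_bounds c lam d g x0 M :
  policy c x0 -> (forall x, policy c x -> avg_reward c lam d g x <= M) ->
  avg_reward c lam d g x0 <= opt_reward c lam d g <= M.
Proof.
  intros Hx0 Hub. unfold opt_reward.
  set (S := fun r => exists x, policy c x /\ r = avg_reward c lam d g x).
  destruct (Lub_Rbar_correct S) as [Hu Hl].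
  assert (H1 : Rbar_le (avg_reward c lam d g x0) (Lub_Rbar S)) by (apply Hu; exists x0; auto).
  assert (H2 : Rbar_le (Lub_Rbar S) M).
  { apply Hl. intros r [x [Hx ->]]. apply Hub; auto. }
  destruct (Lub_Rbar S) as [l| |]; simpl in *; tauto.
Qed.

Lemma eventually_large_scale alpha M : 1 < alpha ->
  exists c0 : nat, (1 <= c0)%nat /\
    forall c : nat, (c0 <= c)%nat -> M <= Rpower (INR c) (1 / (alpha + 1)).
Proof.
  intros Ha. set (beta := 1 / (alpha + 1)). assert (Hb : 0 < beta) by (apply Rdiv_lt_0_compat; lra).
  set (M' := Rmax M 1). assert (HM' : 1 <= M') by apply Rmax_r.
  set (A := Rpower M' (1 / beta)).
  destruct (nat_of_up A (Rpower_pos _ _)) as [N [HN1 HN2]].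
  exists (S N). split; [lia|]. intros c Hc.
  assert (INR N <= INR c) by (apply le_INR; lia).
  apply Rle_trans with M'; [apply Rmax_l|].
  replace M' with (Rpower A beta).
  - apply Rle_Rpower_l; [lra|]. split; [apply Rpower_pos|lra].
  - unfold A. rewrite Rpower_mult. replace (1 / beta * beta) with 1 by (field; lra).
    apply Rpower_1; lra.
Qed.

Lemma scale_identities c alpha : 0 < INR c -> 1 < alpha ->
  Rpower (Rpower (INR c) (1 / (alpha + 1))) alpha * Rpower (INR c) (1 / (alpha + 1)) = INR c /\
  ln (INR c) = (alpha + 1) * ln (Rpower (INR c) (1 / (alpha + 1))).
Proof.
  intros Hc Ha. split.
  - rewrite Rpower_mult, <- Rpower_plus.
    replace (1 / (alpha + 1) * alpha + 1 / (alpha + 1)) with 1 by (field; lra).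
    apply Rpower_1; lra.
  - rewrite ln_Rpower. field. lra.
Qed.

Lemma le_Rpower_self gam alpha : 1 <= gam -> 1 <= alpha -> gam <= Rpower gam alpha.
Proof.
  intros Hg Ha. rewrite <- (Rpower_1 gam) at 1 by lra. now apply Rle_Rpower.
Qed.

(* [r ln x <= x^r], from [1 + y <= e^y]. *)
Lemma ln_le_Rpower r x : 0 < r -> 0 < x -> r * ln x <= Rpower x r.
Proof.
  intros Hr Hx. pose proof (exp_ineq1_le (r * ln x)). unfold Rpower. lra.
Qed.

Lemma power_beats_log alpha a : 1 < alpha -> 0 <= a ->
  exists M, 1 <= M /\ forall gam, M <= gam -> a * gam * ln gam + a <= Rpower gam alpha.
Proof.
  intros Ha Ha0. set (r := (alpha - 1) / 2). assert (Hr : 0 < r) by (unfold r; lra).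
  set (B := Rmax 1 (a * (1 / r + 1))).
  exists (Rpower B (1 / r)).
  assert (HB : 1 <= B) by apply Rmax_l.
  assert (HM : 1 <= Rpower B (1 / r)).
  { apply Rle_trans with (Rpower B 0); [rewrite Rpower_O; lra|].
    apply Rle_Rpower; [lra|]. apply Rlt_le, Rdiv_lt_0_compat; lra. }
  split; [exact HM|]. intros gam Hgam.
  assert (Hg1 : 1 <= gam) by lra.
  (* [gam^r >= B] and [ln gam <= gam^r / r]. *)
  assert (HgB : B <= Rpower gam r).
  { replace B with (Rpower (Rpower B (1 / r)) r).
    - apply Rle_Rpower_l; lra.
    - rewrite Rpower_mult. replace (1 / r * r) with 1 by (field; lra). apply Rpower_1; lra. }
  assert (Hln : ln gam <= Rpower gam r / r).
  { apply Rmult_le_reg_l with r; [lra|]. field_simplify; [|lra]. apply ln_le_Rpower; lra. }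
  assert (Hln0 : 0 <= ln gam) by (rewrite <- ln_1; apply ln_le; lra).
  assert (Hsplit : Rpower gam alpha = gam * Rpower gam r * Rpower gam r).
  { replace alpha with (1 + r + r) at 1 by (unfold r; field).
    rewrite !Rpower_plus, Rpower_1 by lra. reflexivity. }
  assert (Hgr : 1 <= Rpower gam r) by lra.
  assert (Hbound : a * (1 / r + 1) <= Rpower gam r).
  { pose proof (Rmax_r 1 (a * (1 / r + 1))) as Hmax. fold B in Hmax. lra. }
  rewrite Hsplit.
  apply Rle_trans with (a * (1 / r + 1) * (gam * Rpower gam r)).
  - assert (a * gam * ln gam <= a * gam * (Rpower gam r / r)) by (apply Rmult_le_compat_l; nra).
    assert (a <= a * (gam * Rpower gam r)) by (rewrite <- (Rmult_1_r a) at 1; apply Rmult_le_compat_l; nra).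
    replace (a * (1 / r + 1) * (gam * Rpower gam r))
      with (a * gam * (Rpower gam r / r) + a * (gam * Rpower gam r)) by (field; lra).
    lra.
  - rewrite (Rmult_comm (gam * Rpower gam r)). apply Rmult_le_compat_r; [nra|exact Hbound].
Qed.

Lemma exp_le_mono x y : x <= y -> exp x <= exp y.
Proof. intros [Hlt|Heq]; [left; now apply exp_increasing|rewrite Heq; lra]. Qed.

Lemma pow_le_exp u n : 0 <= u <= 1 -> (1 - u) ^ n <= exp (- (u * INR n)).
Proof.
  intros Hu. induction n as [|n IH]; simpl pow; [rewrite Rmult_0_r, Ropp_0, exp_0; lra|].
  rewrite S_INR. replace (- (u * (INR n + 1))) with (- u + - (u * INR n)) by ring.
  rewrite exp_plus. pose proof (exp_ineq1_le (- u)). pose proof (pow_le (1 - u) n).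
  apply Rmult_le_compat; lra.
Qed.

Lemma scale_threshold u v gam : 0 < u -> 0 < v -> u / v <= gam -> u / gam <= v.
Proof.
  intros Hu Hv Hg. assert (0 < u / v) by (apply Rdiv_lt_0_compat; lra).
  apply Rmult_le_reg_r with (gam / v); [apply Rdiv_lt_0_compat; lra|].
  replace (u / gam * (gam / v)) with (u / v) by (field; lra).
  replace (v * (gam / v)) with gam by (field; lra). exact Hg.
Qed.

Lemma one_le_ln x : 3 <= x -> 1 <= ln x.
Proof.
  intros Hx. rewrite <- (ln_exp 1). apply ln_le; [apply exp_pos|]. pose proof exp_le_3. lra.
Qed.

Lemma geometric_le_inv u tau (C : R) : 0 <= u <= 1 -> 0 < C -> ln C <= u * INR tau ->
  (1 - u) ^ tau <= / C.
Proof.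
  intros Hu HC Hln. apply Rle_trans with (exp (- (u * INR tau))); [now apply pow_le_exp|].
  rewrite <- (exp_ln C), <- exp_Ropp by lra. apply exp_le_mono. lra.
Qed.

Definition upper_const (g : R -> R) (xs d s k1 : R) : R :=
  g xs / (xs * d) + k1 / (xs * d) + s / d * (3 * xs + 1).

Lemma dominated_by_gam_log_sq a b e xs gam L :
  0 <= a -> 0 <= b -> 0 <= e -> 0 < xs -> 1 <= gam -> 1 <= L ->
  a + b * gam + e * (2 * xs * gam * L + 1 + xs * gam) <= (a + b + e * (3 * xs + 1)) * gam * L ^ 2.
Proof.
  intros Ha Hb He Hxs Hg HL.
  set (Q := gam * L ^ 2).
  assert (HQL : gam * L <= Q) by (unfold Q; simpl; apply Rmult_le_compat_l; nra).
  assert (HQg : gam <= Q) by (apply Rle_trans with (gam * L); [nra|exact HQL]).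
  assert (HQ1 : 1 <= Q) by lra.
  replace ((a + b + e * (3 * xs + 1)) * gam * L ^ 2) with (a * Q + b * Q + e * ((3 * xs + 1) * Q))
    by (unfold Q; ring).
  assert (a <= a * Q) by nra. assert (b * gam <= b * Q) by nra.
  assert (2 * xs * gam * L + 1 + xs * gam <= (3 * xs + 1) * Q) by nra.
  assert (e * (2 * xs * gam * L + 1 + xs * gam) <= e * ((3 * xs + 1) * Q))
    by (apply Rmult_le_compat_l; lra).
  lra.
Qed.

(* With [delta = 1 / gam] and [tau ~ 2 xs gam ln c], each term of
   [two_price_loss] is [O(gam (ln c)^2)]: the stock-out term is [O(1)] since
   [rho^tau <= 1 / c], the curvature term is [k1 gam / (xs d)], and the idle
   stock term is [O(gam ln c)]. *)
Lemma two_price_loss_at_scale c lam d xs alpha g s eps k1 gam tau pi :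
  (1 <= c)%nat -> 0 < d -> 0 < xs < 1 -> lam * xs * d = INR c -> reward_function g ->
  0 <= s -> 0 <= k1 ->
  (forall z, xs - eps <= z <= xs + eps ->
     g xs + s * (z - xs) - k1 * rpow (Rabs (z - xs)) alpha <= g z) ->
  1 <= gam -> Rpower gam alpha * gam = INR c -> 1 / gam <= eps -> 1 / gam <= xs / 2 ->
  1 <= ln (INR c) -> 2 * xs * gam * ln (INR c) <= INR tau <= 2 * xs * gam * ln (INR c) + 1 ->
  2 * xs * INR tau <= 1 / gam * INR c -> (1 <= tau <= c)%nat ->
  is_steady_state c lam d (two_price (xs - 1 / gam) (xs + 1 / gam) tau) pi ->
  lam * g xs - sum_f 1 c (fun j => pi j * lam * g (two_price (xs - 1 / gam) (xs + 1 / gam) tau j))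
  <= upper_const g xs d s k1 * gam * ln (INR c) ^ 2.
Proof.
  intros Hc Hd Hxs Hlam Hg Hs Hk1 Hloc Hg1 Hpow Heps Hxs2 HL Htau Htc Htauc Hss.
  assert (Hcpos : 0 < INR c) by (apply lt_0_INR; lia).
  assert (Hdel : 0 < 1 / gam) by (apply Rdiv_lt_0_compat; lra).
  eapply Rle_trans.
  { apply (two_price_loss c lam d xs alpha g s eps k1 (1 / gam) tau pi); auto; lra. }
  set (L := ln (INR c)) in *.
  pose proof Hg as [Hg0 [Hmon _]].
  assert (Hgx : 0 <= g xs) by (rewrite <- Hg0; apply Hmon; lra).
  assert (Hlx : lam = INR c / (xs * d)) by (field_simplify_eq; lra).
  assert (Hrho : (1 - 1 / gam / (2 * xs)) ^ tau <= / INR c).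
  { apply geometric_le_inv; [split| |]; try lra.
    - apply Rlt_le, Rdiv_lt_0_compat; lra.
    - apply Rmult_le_reg_r with (2 * xs); [lra|]. field_simplify; lra.
    - fold L. replace L with (1 / gam / (2 * xs) * (2 * xs * gam * L)) at 1 by (field; lra).
      apply Rmult_le_compat_l; [apply Rlt_le, Rdiv_lt_0_compat|]; lra. }
  assert (Hstock : lam * g xs * (1 - 1 / gam / (2 * xs)) ^ tau <= g xs / (xs * d)).
  { apply Rle_trans with (lam * g xs * / INR c).
    - apply Rmult_le_compat_l; [rewrite Hlx; apply Rmult_le_pos; [apply Rdiv_le_0_compat; nra|lra]|lra].
    - right. rewrite Hlx. field. lra. }
  assert (Hcurv : lam * k1 * Rpower (1 / gam) alpha = k1 / (xs * d) * gam).
  { replace (1 / gam) with (/ gam) by (field; lra). rewrite Rpower_inv by lra.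
    rewrite Hlx, <- Hpow. field. pose proof (Rpower_pos gam alpha). lra. }
  assert (Hidle : s * (INR tau + xs / (1 / gam)) / d <= s / d * (2 * xs * gam * L + 1 + xs * gam)).
  { replace (s / d * (2 * xs * gam * L + 1 + xs * gam))
      with (s * ((2 * xs * gam * L + 1) + xs / (1 / gam)) / d) by (field; lra).
    apply Rmult_le_compat_r; [apply Rlt_le, Rinv_0_lt_compat; lra|].
    apply Rmult_le_compat_l; lra. }
  unfold upper_const. rewrite Hcurv.
  assert (0 <= g xs / (xs * d)) by (apply Rdiv_le_0_compat; nra).
  assert (0 <= k1 / (xs * d)) by (apply Rdiv_le_0_compat; nra).
  assert (0 <= s / d) by (apply Rdiv_le_0_compat; lra).
  eapply Rle_trans; [|apply dominated_by_gam_log_sq; auto; lra]. lra.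
Qed.

Lemma lower_bound_eventually xs d alpha g s eps k2 :
  0 < xs < 1 -> 0 < d -> 1 < alpha -> reward_function g ->
  0 < s -> supergradient g xs s -> 0 < eps -> 0 < k2 ->
  (forall z, xs - eps <= z <= xs + eps ->
     g z <= g xs + s * (z - xs) - k2 * rpow (Rabs (z - xs)) alpha) ->
  exists c0 : nat, forall c : nat, (c0 <= c)%nat -> forall x, policy c x ->
    avg_reward c (INR c / (xs * d)) d g x
    <= INR c / (xs * d) * g xs - lower_const d s k2 alpha xs * Rpower (INR c) (1 / (alpha + 1)).
Proof.
  intros Hxs Hd Ha Hg Hs Hsg Heps Hk2 Hloc.
  destruct (eventually_large_scale alpha (Rmax 4 (xs / 18 / eps)) Ha) as [c0 [Hc0 Hlarge]].
  exists c0. intros c Hc x Hx.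
  set (lam := INR c / (xs * d)). set (gam := Rpower (INR c) (1 / (alpha + 1))).
  assert (Hcpos : 0 < INR c) by (apply lt_0_INR; lia).
  destruct (scale_identities c alpha Hcpos Ha) as [Hpow _]. fold gam in Hpow.
  assert (Hgam : Rmax 4 (xs / 18 / eps) <= gam) by (apply Hlarge; lia).
  assert (Hg4 : 4 <= gam) by (eapply Rle_trans; [apply Rmax_l|exact Hgam]).
  assert (Hgeps : xs / 18 / gam <= eps).
  { apply scale_threshold; [lra|lra|]. eapply Rle_trans; [apply Rmax_r|exact Hgam]. }
  assert (Hself : gam <= Rpower gam alpha) by (apply le_Rpower_self; lra).
  assert (Hlam : lam * xs * d = INR c) by (unfold lam; field; lra).
  assert (Hlampos : 0 < lam) by (apply Rdiv_lt_0_compat; nra).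
  pose proof (steady_state_spec c lam d x Hlampos Hd Hx) as Hss.
  assert (Hgg : gam * gam <= INR c) by (rewrite <- Hpow; apply Rmult_le_compat_r; lra).
  pose proof (loss_lower_bound c lam d xs alpha g s eps k2 gam x _ ltac:(lia) Hd Hxs Hlam Hg Hs
                Hsg Hk2 Hloc ltac:(lra) ltac:(nra) Hgg Hpow Hgeps Hx Hss).
  unfold avg_reward. lra.
Qed.

Lemma tau_choice c xs alpha gam :
  0 < xs < 1 -> 1 < alpha -> 3 <= gam -> 1 / gam <= xs / 2 -> Rpower gam alpha * gam = INR c ->
  ln (INR c) = (alpha + 1) * ln gam -> 1 <= ln (INR c) ->
  (4 * xs * xs * (alpha + 1) + 2 * xs) * gam * ln gam + (4 * xs * xs * (alpha + 1) + 2 * xs)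
    <= Rpower gam alpha ->
  exists tau : nat,
    2 * xs * gam * ln (INR c) <= INR tau <= 2 * xs * gam * ln (INR c) + 1 /\
    2 * xs * INR tau <= 1 / gam * INR c /\ (1 <= tau <= c)%nat.
Proof.
  intros Hxs Ha Hg3 Hdxs Hpow Hln HL Hlog.
  assert (Hpos : 0 < 2 * xs * gam * ln (INR c)) by (repeat apply Rmult_lt_0_compat; lra).
  destruct (nat_of_up _ Hpos) as [tau [Ht1 Ht2]].
  assert (Htc : 2 * xs * INR tau <= 1 / gam * INR c).
  { replace (1 / gam * INR c) with (Rpower gam alpha) by (rewrite <- Hpow; field; lra).
    eapply Rle_trans; [|exact Hlog].
    assert (Hlg : 0 <= gam * ln gam).
    { apply Rmult_le_pos; [lra|]. rewrite <- ln_1. apply ln_le; lra. }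
    assert (0 <= 2 * xs * (gam * ln gam)) by (apply Rmult_le_pos; lra).
    assert (0 <= 4 * xs * xs * (alpha + 1)) by (assert (0 <= xs * xs) by nra; nra).
    rewrite Hln in Ht2.
    apply Rle_trans with (4 * xs * xs * (alpha + 1) * (gam * ln gam) + 2 * xs).
    - replace (4 * xs * xs * (alpha + 1) * (gam * ln gam) + 2 * xs)
        with (2 * xs * (2 * xs * gam * ((alpha + 1) * ln gam) + 1)) by ring.
      apply Rmult_le_compat_l; lra.
    - replace ((4 * xs * xs * (alpha + 1) + 2 * xs) * gam * ln gam)
        with (4 * xs * xs * (alpha + 1) * (gam * ln gam) + 2 * xs * (gam * ln gam)) by ring.
      lra. }
  exists tau. split; [lra|]. split; [exact Htc|]. split.
  - destruct tau; [simpl in Ht1; lra|lia].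
  - apply INR_le.
    assert (1 / gam * INR c <= xs / 2 * INR c) by (apply Rmult_le_compat_r; [apply pos_INR|lra]).
    assert (Hx4 : xs * (4 * INR tau) <= xs * INR c) by lra.
    apply Rmult_le_reg_l in Hx4; [|lra]. pose proof (pos_INR tau). lra.
Qed.

Lemma upper_bound_eventually xs d alpha g s eps k1 :
  0 < xs < 1 -> 0 < d -> 1 < alpha -> reward_function g -> 0 <= s ->
  0 < eps -> eps < Rmin xs (1 - xs) -> 0 <= k1 ->
  (forall z, xs - eps <= z <= xs + eps ->
     g xs + s * (z - xs) - k1 * rpow (Rabs (z - xs)) alpha <= g z) ->
  exists c0 : nat, forall c : nat, (c0 <= c)%nat ->
    exists (xL xH : R) (tau : nat),
      0 <= xL <= 1 /\ 0 <= xH <= 1 /\ (1 <= tau <= c)%nat /\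
      INR c / (xs * d) * g xs - avg_reward c (INR c / (xs * d)) d g (two_price xL xH tau)
      <= upper_const g xs d s k1 * Rpower (INR c) (1 / (alpha + 1)) * ln (INR c) ^ 2.
Proof.
  intros Hxs Hd Ha Hg Hs Heps Hepsm Hk1 Hloc.
  pose proof (Rmin_l xs (1 - xs)). pose proof (Rmin_r xs (1 - xs)).
  set (a := 4 * xs * xs * (alpha + 1) + 2 * xs).
  assert (Ha0 : 0 <= a) by (unfold a; assert (0 <= xs * xs) by nra; nra).
  destruct (power_beats_log alpha a Ha Ha0) as [Mlog [HM1 Hlog]].
  set (M := Rmax (Rmax 3 Mlog) (Rmax (1 / eps) (1 / (xs / 2)))).
  destruct (eventually_large_scale alpha M Ha) as [c0 [Hc0 Hlarge]].
  exists c0. intros c Hc.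
  set (gam := Rpower (INR c) (1 / (alpha + 1))).
  assert (Hcpos : 0 < INR c) by (apply lt_0_INR; lia).
  destruct (scale_identities c alpha Hcpos Ha) as [Hpow Hln]. fold gam in Hpow, Hln.
  assert (HM : M <= gam) by (apply Hlarge; lia). unfold M in HM.
  pose proof (Rmax_l (Rmax 3 Mlog) (Rmax (1 / eps) (1 / (xs / 2)))).
  pose proof (Rmax_r (Rmax 3 Mlog) (Rmax (1 / eps) (1 / (xs / 2)))).
  pose proof (Rmax_l 3 Mlog). pose proof (Rmax_r 3 Mlog).
  pose proof (Rmax_l (1 / eps) (1 / (xs / 2))). pose proof (Rmax_r (1 / eps) (1 / (xs / 2))).
  assert (Hg3 : 3 <= gam) by lra.
  assert (Hdeps : 1 / gam <= eps) by (apply scale_threshold; lra).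
  assert (Hdxs : 1 / gam <= xs / 2) by (apply scale_threshold; lra).
  assert (Hgc : gam <= INR c) by (rewrite <- Hpow; pose proof (le_Rpower_self gam alpha); nra).
  assert (HL : 1 <= ln (INR c)) by (apply one_le_ln; lra).
  destruct (tau_choice c xs alpha gam Hxs Ha Hg3 Hdxs Hpow Hln HL (Hlog gam ltac:(lra)))
    as [tau [Ht [Htc Htau]]].
  assert (Hdel : 0 < 1 / gam) by (apply Rdiv_lt_0_compat; lra).
  set (lam := INR c / (xs * d)).
  assert (Hlam : lam * xs * d = INR c) by (unfold lam; field; lra).
  assert (Hpol : policy c (two_price (xs - 1 / gam) (xs + 1 / gam) tau)).
  { intros j _. unfold two_price. destruct (j <=? tau)%nat; lra. }
  exists (xs - 1 / gam), (xs + 1 / gam), tau.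
  split; [lra|]. split; [lra|]. split; [exact Htau|].
  unfold avg_reward.
  apply (two_price_loss_at_scale c lam d xs alpha g s eps k1 gam tau); auto; try lra; try lia.
  apply steady_state_spec; auto.
  apply (arrival_rate_pos c lam d xs); auto; [lia|lra].
Qed.

Theorem corollary1 (xs d alpha : R) (g : R -> R) :
  0 < xs < 1 -> 0 < d -> 1 < alpha ->
  reward_function g ->
  (exists s1, 0 < s1 /\ assumption1 g xs alpha s1) ->
  (exists s2, assumption2 g xs alpha s2) ->
  exists (K1 K2 : R) (c0 : nat),
    0 < K1 /\ K1 <= K2 /\
    forall c : nat, (c0 <= c)%nat ->
      let lam := INR c / (xs * d) in
      exists (xL xH : R) (tau : nat),
        0 <= xL <= 1 /\ 0 <= xH <= 1 /\ (1 <= tau <= c)%nat /\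
        K1 * Rpower (INR c) (1 / (alpha + 1))
          <= lam * g xs - opt_reward c lam d g /\
        lam * g xs - opt_reward c lam d g
          <= lam * g xs - avg_reward c lam d g (two_price xL xH tau) /\
        lam * g xs - avg_reward c lam d g (two_price xL xH tau)
          <= K2 * Rpower (INR c) (1 / (alpha + 1)) * (ln (INR c)) ^ 2.
Proof.
  intros Hxs Hd Ha Hg [s1 [Hs1 HA1]] [s2 HA2].
  pose proof (slope_pos g xs alpha s1 s2 Ha Hs1 HA1 HA2) as Hs2.
  destruct HA1 as [e1 [k1 [He1 [He1m [Hk1 [_ [_ Hloc1]]]]]]].
  destruct HA2 as [e2 [k2 [He2 [_ [Hk2 [_ [Hsg2 Hloc2]]]]]]].
  destruct (lower_bound_eventually xs d alpha g s2 e2 k2 Hxs Hd Ha Hg Hs2 Hsg2 He2 Hk2 Hloc2)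
    as [c1 Hlower].
  destruct (upper_bound_eventually xs d alpha g s1 e1 k1 Hxs Hd Ha Hg ltac:(lra) He1 He1m Hk1 Hloc1)
    as [c2 Hupper].
  set (K1 := lower_const d s2 k2 alpha xs). set (K2 := upper_const g xs d s1 k1).
  exists K1, (Rmax K1 K2), (max c1 c2).
  split; [now apply lower_const_pos; lra|]. split; [apply Rmax_l|].
  intros c Hc lam.
  destruct (Hupper c ltac:(lia)) as [xL [xH [tau [HxL [HxH [Htau Hloss]]]]]].
  exists xL, xH, tau. refine (conj HxL (conj HxH (conj Htau _))).
  assert (Hpol : policy c (two_price xL xH tau)).
  { intros j _. unfold two_price. destruct (j <=? tau)%nat; auto. }
  destruct (opt_reward_bounds c lam d g _ _ Hpol (Hlower c ltac:(lia))) as [Hopt1 Hopt2].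
  fold lam in Hopt1, Hopt2, Hloss. fold K1 in Hopt2.
  split; [lra|split; [lra|]].
  apply Rle_trans with (K2 * Rpower (INR c) (1 / (alpha + 1)) * ln (INR c) ^ 2); [exact Hloss|].
  apply Rmult_le_compat_r; [apply pow2_ge_0|].
  apply Rmult_le_compat_r; [apply Rlt_le, Rpower_pos|apply Rmax_r].
Qed.
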